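(* Let $S\ge 2$ and $\alpha_1,\dots,\alpha_S>0$. As $n\to\infty$ through values with $m_j=\alpha_j n$ positive integers for all $j$, and with $M=m_1+\dots+m_S$, $$B(m_1,\dots,m_S)\sim\frac{m_1\cdots m_S}{(M-m_1)\cdots(M-m_S)}\cdot\frac{M!}{m_1!\cdots m_S!}.$$
   Context: For positive integers $m_1,\dots,m_S$, $B(m_1,\dots,m_S)=\sum_{\ell_1=0}^{m_1-1}\cdots\sum_{\ell_S=0}^{m_S-1}\frac{(\ell_1+\dots+\ell_S)!}{\ell_1!\cdots\ell_S!}$; equivalently $B(m_1,\dots,m_S)=\sum_{k_1=1}^{m_1}\cdots\sum_{k_S=1}^{m_S}\binom{m_1}{k_1}\cdots\binom{m_S}{k_S}E(k_1-1,\dots,k_S-1)$ where $E$ is the block derangement number. *)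

From Stdlib Require Import Reals List Arith.
Import ListNotations.
Open Scope R_scope.

Fixpoint tuples (ms : list nat) : list (list nat) :=
  match ms with
  | [] => [[]]
  | m :: ms' => flat_map (fun l => map (cons l) (tuples ms')) (seq 0 m)
  end.

Definition Rsum (xs : list R) : R := fold_right Rplus 0 xs.
Definition Rprod (xs : list R) : R := fold_right Rmult 1 xs.

Definition multinom (ls : list nat) : R :=
  INR (fact (list_sum ls)) / Rprod (map (fun l => INR (fact l)) ls).

Definition B (ms : list nat) : R := Rsum (map multinom (tuples ms)).

Definition Bapprox (ms : list nat) : R :=
  let M := list_sum ms in
  Rprod (map INR ms) / Rprod (map (fun m => INR M - INR m) ms)
  * (INR (fact M) / Rprod (map (fun m => INR (fact m)) ms)).

(* Write m_0 for the first coordinate and ms for the others.  Summing out the first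
   coordinate with the hockey-stick identity turns B(m_0, ms) into a sum, over the
   tuples l < ms, of terms weight(|l|) / l! (B_as_term_sum).  The largest term is the
   one at the corner l = ms - 1, and the ratio of two neighbouring terms is an explicit
   rational function of the coordinates (weight_shift).  Comparing every term with the
   corner along coordinate paths (term_vs_corner) bounds B by the corner term times
   products of geometric series: near the corner (in a window of width b) the ratios are
   essentially alpha_j / A with A = sum_j alpha_j, and outside the window they are
   uniformly below some th v < 1, which makes that part negligible (B_upper, B_lower).
   Bapprox is the corner term times an explicit rational factor (Bapprox_factor), so
   B / Bapprox is squeezed between two explicit functions of n (B_ratio_bounds).  Their
   limits as n -> oo are within any eps of 1 once b is large (B_ratio_eventually), which
   gives the theorem (B_equiv_Bapprox, mainTheorem16). *)

From Stdlib Require Import Reals List Arith Lia Lra.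
From Coquelicot Require Import Coquelicot.
Import ListNotations.
Open Scope R_scope.

Lemma Rsum_app (a b : list R) : Rsum (a ++ b) = Rsum a + Rsum b.
Proof. induction a as [|x a IH]; unfold Rsum in *; simpl; [lra|]. rewrite IH. lra. Qed.

Lemma Rsum_plus {A} (f g : A -> R) (l : list A) :
  Rsum (map (fun x => f x + g x) l) = Rsum (map f l) + Rsum (map g l).
Proof. induction l as [|x l IH]; unfold Rsum in *; simpl; [lra|]. rewrite IH. lra. Qed.

Lemma Rsum_minus {A} (f g : A -> R) (l : list A) :
  Rsum (map (fun x => f x - g x) l) = Rsum (map f l) - Rsum (map g l).
Proof. induction l as [|x l IH]; unfold Rsum in *; simpl; [lra|]. rewrite IH. lra. Qed.

Lemma Rsum_scal_l {A} (c : R) (f : A -> R) (l : list A) :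
  Rsum (map (fun x => c * f x) l) = c * Rsum (map f l).
Proof. induction l as [|x l IH]; unfold Rsum in *; simpl; [lra|]. rewrite IH. lra. Qed.

Lemma Rsum_scal_r {A} (c : R) (f : A -> R) (l : list A) :
  Rsum (map (fun x => f x * c) l) = Rsum (map f l) * c.
Proof. induction l as [|x l IH]; unfold Rsum in *; simpl; [lra|]. rewrite IH. lra. Qed.

Lemma Rsum_const {A} (c : R) (l : list A) : Rsum (map (fun _ => c) l) = INR (length l) * c.
Proof.
  induction l as [|x l IH]; unfold Rsum in *; cbn [map fold_right length]; [simpl; ring|].
  rewrite IH, S_INR. ring.
Qed.

Lemma Rsum_ext {A} (f g : A -> R) (l : list A) :
  (forall x, In x l -> f x = g x) -> Rsum (map f l) = Rsum (map g l).
Proof. intro H. f_equal. apply map_ext_in. exact H. Qed.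

Lemma Rsum_le {A} (f g : A -> R) (l : list A) :
  (forall x, In x l -> f x <= g x) -> Rsum (map f l) <= Rsum (map g l).
Proof.
  induction l as [|x l IH]; intro H; unfold Rsum in *; simpl; [lra|].
  apply Rplus_le_compat; auto with datatypes.
Qed.

Lemma Rsum_nonneg {A} (f : A -> R) (l : list A) :
  (forall x, In x l -> 0 <= f x) -> 0 <= Rsum (map f l).
Proof.
  intro H. replace 0 with (Rsum (map (fun _ : A => 0) l)) at 1.
  - apply Rsum_le. exact H.
  - rewrite Rsum_const. ring.
Qed.

Lemma Rsum_ge_elt {A} (f : A -> R) (l : list A) (x : A) :
  In x l -> (forall y, In y l -> 0 <= f y) -> f x <= Rsum (map f l).
Proof.
  induction l as [|a l IH]; simpl; [tauto|]. intros Hx H.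
  unfold Rsum; simpl; fold (Rsum (map f l)).
  assert (0 <= Rsum (map f l)) by (apply Rsum_nonneg; auto).
  destruct Hx as [->|Hx]; [lra|].
  pose proof (H a (or_introl eq_refl)). pose proof (IH Hx (fun y Hy => H y (or_intror Hy))). lra.
Qed.

Lemma Rsum_flat_map {A B} (F : B -> R) (G : A -> list B) (s : list A) :
  Rsum (map F (flat_map G s)) = Rsum (map (fun x => Rsum (map F (G x))) s).
Proof.
  induction s as [|x s IH]; simpl; [reflexivity|].
  rewrite map_app, Rsum_app, IH. reflexivity.
Qed.

Lemma Rsum_swap {A B} (F : A -> B -> R) (s : list A) (T : list B) :
  Rsum (map (fun x => Rsum (map (fun y => F x y) T)) s) =
  Rsum (map (fun y => Rsum (map (fun x => F x y) s)) T).
Proof.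
  induction s as [|x s IH]; simpl.
  - rewrite Rsum_const. unfold Rsum; simpl. ring.
  - unfold Rsum at 1; simpl. fold (Rsum (map (fun x => Rsum (map (fun y => F x y) T)) s)).
    rewrite IH, <- Rsum_plus. reflexivity.
Qed.

Lemma INR_list_sum (l : list nat) : INR (list_sum l) = Rsum (map INR l).
Proof. induction l as [|x l IH]; unfold Rsum in *; simpl; auto. rewrite plus_INR, IH. auto. Qed.

Lemma Rprod_app (a b : list R) : Rprod (a ++ b) = Rprod a * Rprod b.
Proof. induction a as [|x a IH]; unfold Rprod in *; simpl; [ring|]. rewrite IH. ring. Qed.

Lemma Rprod_mult {A} (f g : A -> R) (l : list A) :
  Rprod (map (fun x => f x * g x) l) = Rprod (map f l) * Rprod (map g l).
Proof. induction l as [|x l IH]; unfold Rprod in *; simpl; [ring|]. rewrite IH. ring. Qed.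

Lemma Rprod_scal {A} (c : R) (f : A -> R) (l : list A) :
  Rprod (map (fun x => c * f x) l) = c ^ length l * Rprod (map f l).
Proof. induction l as [|x l IH]; unfold Rprod in *; simpl; [ring|]. rewrite IH. ring. Qed.

Lemma Rprod_const {A} (c : R) (l : list A) : Rprod (map (fun _ => c) l) = c ^ length l.
Proof. induction l as [|x l IH]; unfold Rprod in *; simpl; [ring|]. rewrite IH. ring. Qed.

Lemma Rprod_inv {A} (f : A -> R) (l : list A) :
  Rprod (map (fun x => / f x) l) = / Rprod (map f l).
Proof.
  induction l as [|x l IH]; unfold Rprod in *; simpl; [now rewrite Rinv_1|].
  rewrite IH, Rinv_mult. reflexivity.
Qed.

Lemma Rprod_ext {A} (f g : A -> R) (l : list A) :
  (forall x, In x l -> f x = g x) -> Rprod (map f l) = Rprod (map g l).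
Proof. intro H. f_equal. apply map_ext_in. exact H. Qed.

Lemma Rprod_nonneg {A} (f : A -> R) (l : list A) :
  (forall x, In x l -> 0 <= f x) -> 0 <= Rprod (map f l).
Proof.
  induction l as [|x l IH]; intro H; unfold Rprod in *; simpl; [lra|].
  apply Rmult_le_pos; auto with datatypes.
Qed.

Lemma Rprod_pos {A} (f : A -> R) (l : list A) :
  (forall x, In x l -> 0 < f x) -> 0 < Rprod (map f l).
Proof.
  induction l as [|x l IH]; intro H; unfold Rprod in *; simpl; [lra|].
  apply Rmult_lt_0_compat; auto with datatypes.
Qed.

Lemma Rprod_le {A} (f g : A -> R) (l : list A) :
  (forall x, In x l -> 0 <= f x <= g x) -> Rprod (map f l) <= Rprod (map g l).
Proof.
  induction l as [|x l IH]; intro H; unfold Rprod in *; simpl; [lra|].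
  apply Rmult_le_compat; auto with datatypes; try apply H; auto with datatypes.
  apply Rprod_nonneg. intros y Hy. apply H; auto with datatypes.
Qed.

Lemma Rprod_ge1 {A} (f : A -> R) (l : list A) :
  (forall x, In x l -> 1 <= f x) -> 1 <= Rprod (map f l).
Proof.
  intro H. rewrite <- (pow1 (length l)), <- Rprod_const. apply Rprod_le.
  intros x Hx. specialize (H x Hx). lra.
Qed.

Lemma Rprod_union_bound {A} (l : list A) (a c : A -> R) (amax : R) :
  (forall x, In x l -> 0 <= a x <= amax /\ 0 <= c x) -> 0 <= amax <= 1 ->
  (1 - INR (length l) * amax) * Rprod (map c l) <= Rprod (map (fun x => (1 - a x) * c x) l).
Proof.
  intros H Hamax. induction l as [|y l IH]; unfold Rprod in *; cbn [map fold_right length].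
  - simpl; lra.
  - fold (Rprod (map c l)) in *. fold (Rprod (map (fun x => (1 - a x) * c x) l)) in *.
    specialize (IH (fun x Hx => H x (or_intror Hx))).
    destruct (H y (or_introl eq_refl)) as [[Ha1 Ha2] Hc].
    assert (HY : 0 <= Rprod (map c l)) by (apply Rprod_nonneg; intros; apply H; auto with datatypes).
    assert (HX : 0 <= Rprod (map (fun x => (1 - a x) * c x) l)).
    { apply Rprod_nonneg. intros x Hx. destruct (H x (or_intror Hx)) as [[? ?] ?].
      apply Rmult_le_pos; lra. }
    rewrite S_INR.
    set (X := Rprod (map (fun x => (1 - a x) * c x) l)) in *.
    set (Y := Rprod (map c l)) in *.
    set (k := INR (length l)) in *.
    assert (0 <= k) by apply pos_INR.
    assert (0 <= c y * Y) by (apply Rmult_le_pos; auto).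
    destruct (Rle_dec 0 (1 - k * amax)).
    + assert ((1 - a y) * c y * ((1 - k * amax) * Y) <= (1 - a y) * c y * X).
      { apply Rmult_le_compat_l; auto. apply Rmult_le_pos; lra. }
      assert (0 <= (amax - a y) * (1 - k * amax) * (c y * Y))
        by (apply Rmult_le_pos; [apply Rmult_le_pos|]; lra).
      assert (0 <= k * amax * a y * (c y * Y)) by (repeat apply Rmult_le_pos; lra).
      nra.
    + assert (0 <= (1 - a y) * c y * X) by (apply Rmult_le_pos; [apply Rmult_le_pos|]; lra).
      assert ((1 - (k + 1) * amax) * (c y * Y) <= 0) by (assert (1 - (k + 1) * amax <= 0) by nra; nra).
      lra.
Qed.

Definition sum_upto (f : nat -> R) (n : nat) : R := Rsum (map f (seq 0 n)).

Lemma sum_upto_S (f : nat -> R) (n : nat) : sum_upto f (S n) = sum_upto f n + f n.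
Proof. unfold sum_upto. rewrite seq_S, map_app, Rsum_app. unfold Rsum; simpl. lra. Qed.

Lemma sum_upto_Sl (f : nat -> R) (n : nat) :
  sum_upto f (S n) = f 0%nat + sum_upto (fun x => f (S x)) n.
Proof. unfold sum_upto. simpl. rewrite <- seq_shift, map_map. reflexivity. Qed.

Lemma sum_upto_ext (f g : nat -> R) (n : nat) :
  (forall k, (k < n)%nat -> f k = g k) -> sum_upto f n = sum_upto g n.
Proof. intro H. apply Rsum_ext. intros x Hx. apply in_seq in Hx. apply H. lia. Qed.

Lemma sum_upto_nonneg (f : nat -> R) (n : nat) : (forall k, 0 <= f k) -> 0 <= sum_upto f n.
Proof. intro H. apply Rsum_nonneg. auto. Qed.

Lemma sum_upto_rev (f : nat -> R) (m : nat) : sum_upto (fun x => f (m - 1 - x)%nat) m = sum_upto f m.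
Proof.
  induction m as [|m IH]; [reflexivity|].
  rewrite sum_upto_Sl, sum_upto_S, (sum_upto_ext _ (fun x => f (m - 1 - x)%nat)).
  - rewrite IH. replace (S m - 1 - 0)%nat with m by lia. lra.
  - intros. f_equal. lia.
Qed.

Lemma geometric_sum (q : R) (n : nat) : q <> 1 -> sum_upto (pow q) n = (1 - q ^ n) / (1 - q).
Proof.
  intro H. induction n as [|n IH].
  - unfold sum_upto, Rsum; simpl. field. lra.
  - rewrite sum_upto_S, IH. simpl. field. lra.
Qed.

Lemma geometric_sum_le (q : R) (n : nat) : 0 <= q < 1 -> sum_upto (pow q) n <= 1 / (1 - q).
Proof.
  intro H. rewrite geometric_sum by lra. apply Rmult_le_compat_r.
  - left; apply Rinv_0_lt_compat; lra.
  - pose proof (pow_le q n). lra.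
Qed.

Lemma geometric_sum_last (q : R) (b m : nat) : (b <= m)%nat ->
  sum_upto (fun x => if (m - b <=? x)%nat then q ^ (m - 1 - x) else 0) m = sum_upto (pow q) b.
Proof.
  intro H.
  rewrite (sum_upto_ext _ (fun x => (fun k => if (k <? b)%nat then q ^ k else 0) (m - 1 - x)%nat)).
  2:{ intros k Hk. destruct (Nat.leb_spec (m - b) k), (Nat.ltb_spec (m - 1 - k) b); auto; lia. }
  rewrite (sum_upto_rev (fun k => if (k <? b)%nat then q ^ k else 0)).
  unfold sum_upto. replace m with (b + (m - b))%nat at 1 by lia.
  rewrite seq_app, map_app, Rsum_app, (Rsum_ext _ (fun _ => 0) (seq b (m - b))),
    (Rsum_ext _ (pow q) (seq 0 b)), Rsum_const; [simpl; ring| |];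
    intros x Hx; apply in_seq in Hx; destruct (Nat.ltb_spec x b); auto; lia.
Qed.

Lemma pow_le_one (q : R) (k : nat) : 0 <= q <= 1 -> q ^ k <= 1.
Proof. intro H. rewrite <- (pow1 k). apply pow_incr. lra. Qed.

Lemma pow_antimono (q : R) (a b : nat) : 0 <= q <= 1 -> (b <= a)%nat -> q ^ a <= q ^ b.
Proof.
  intros H Hab. replace a with (b + (a - b))%nat by lia. rewrite pow_add.
  pose proof (pow_le_one q (a - b) H). pose proof (pow_le q b (proj1 H)). nra.
Qed.

Fixpoint box_prod (g : nat -> nat -> R) (l ms : list nat) : R :=
  match l, ms with x :: l', m :: ms' => g x m * box_prod g l' ms' | _, _ => 1 end.

Fixpoint in_box (lo : nat -> nat) (l ms : list nat) : Prop :=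
  match l, ms with
  | [], [] => True
  | x :: l', m :: ms' => (lo m <= x < m)%nat /\ in_box lo l' ms'
  | _, _ => False
  end.

Lemma in_box_dec (lo : nat -> nat) (l ms : list nat) : in_box lo l ms \/ ~ in_box lo l ms.
Proof.
  revert ms; induction l as [|x l IH]; destruct ms as [|m ms]; simpl; auto.
  destruct (IH ms), (le_lt_dec (lo m) x), (lt_dec x m); try tauto; right; lia.
Qed.

Lemma tuples_in_box (ms l : list nat) : In l (tuples ms) -> in_box (fun _ => 0%nat) l ms.
Proof.
  revert l; induction ms as [|m ms IH]; intros l H; simpl in H.
  - destruct H as [<-|[]]. exact I.
  - apply in_flat_map in H. destruct H as [x [Hx Hl]]. apply in_map_iff in Hl.
    destruct Hl as [l' [<- Hl']]. apply in_seq in Hx. simpl. split; [lia|]. auto.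
Qed.

Lemma in_box_sum_bounds (lo : nat -> nat) (l ms : list nat) : in_box lo l ms ->
  (list_sum (map lo ms) <= list_sum l <= list_sum (map pred ms))%nat.
Proof.
  revert ms; induction l as [|x l IH]; destruct ms as [|m ms]; simpl; try tauto.
  - intros _. lia.
  - intros [Hx Hl]. apply IH in Hl. lia.
Qed.

Lemma sum_tuples_box_prod (g : nat -> nat -> R) (ms : list nat) :
  Rsum (map (fun l => box_prod g l ms) (tuples ms)) =
  Rprod (map (fun m => sum_upto (fun x => g x m) m) ms).
Proof.
  induction ms as [|m ms IH]; simpl.
  - unfold Rsum, Rprod; simpl. lra.
  - rewrite Rsum_flat_map. unfold Rprod; simpl.
    fold (Rprod (map (fun m => sum_upto (fun x => g x m) m) ms)).
    rewrite <- IH. unfold sum_upto. rewrite <- Rsum_scal_r. apply Rsum_ext. intros x _.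
    rewrite map_map. apply Rsum_scal_l.
Qed.

Lemma box_prod_nonneg (g : nat -> nat -> R) (l ms : list nat) :
  (forall x m, 0 <= g x m) -> 0 <= box_prod g l ms.
Proof.
  intro H; revert ms; induction l; destruct ms; simpl; try lra.
  apply Rmult_le_pos; auto.
Qed.

Lemma box_prod_mono (g g' : nat -> nat -> R) (l ms : list nat) :
  (forall x m, 0 <= g x m <= g' x m) -> box_prod g l ms <= box_prod g' l ms.
Proof.
  intro H; revert ms; induction l; destruct ms; simpl; try lra.
  apply Rmult_le_compat; try apply H; auto. apply box_prod_nonneg; intros; apply H.
Qed.

(** By the hockey-stick identity
      sum_{x < m0} (x + L)! / x! = (L + m0)! / ((m0 - 1)! (L + 1)) =: weight m0 L,
    B(m0, ms) becomes a sum over the remaining coordinates of terms weight(|l|) / l!. *)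

Definition weight (m0 L : nat) : R := INR (fact (L + m0)) / (INR (fact (m0 - 1)) * INR (L + 1)).

Definition dfact (l : list nat) : R := Rprod (map (fun x => INR (fact x)) l).

Definition term (w : nat -> R) (E : nat) (l : list nat) : R := w (E + list_sum l)%nat / dfact l.

Lemma fact_S_INR (x : nat) : INR (fact (S x)) = INR (S x) * INR (fact x).
Proof. apply mult_INR. Qed.

Lemma dfact_pos (l : list nat) : 0 < dfact l.
Proof. apply Rprod_pos. intros. apply INR_fact_lt_0. Qed.

Lemma weight_pos (m0 L : nat) : 0 < weight m0 L.
Proof.
  unfold weight. apply Rdiv_lt_0_compat; [apply INR_fact_lt_0|].
  apply Rmult_lt_0_compat; [apply INR_fact_lt_0|apply lt_0_INR; lia].
Qed.

Lemma term_weight_pos (m0 E : nat) (l : list nat) : 0 < term (weight m0) E l.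
Proof. apply Rdiv_lt_0_compat; [apply weight_pos|apply dfact_pos]. Qed.

Lemma term_cons (w : nat -> R) (E x : nat) (l : list nat) :
  term w E (x :: l) = term w (E + x) l / INR (fact x).
Proof.
  unfold term, dfact, Rprod. simpl. fold (Rprod (map (fun x => INR (fact x)) l)).
  replace (E + (x + list_sum l))%nat with (E + x + list_sum l)%nat by lia.
  unfold Rdiv. rewrite Rinv_mult. ring.
Qed.

Lemma hockey_stick (m L : nat) : (1 <= m)%nat ->
  sum_upto (fun x => INR (fact (x + L)) / INR (fact x)) m = weight m L.
Proof.
  intro Hm. unfold weight. destruct m as [|m]; [lia|]. replace (S m - 1)%nat with m by lia.
  clear Hm. pose proof (pos_INR L).
  induction m as [|m IH].
  - unfold sum_upto, Rsum; simpl. replace (L + 1)%nat with (S L) by lia.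
    rewrite fact_S_INR, S_INR. pose proof (INR_fact_neq_0 L). field. lra.
  - rewrite sum_upto_S, IH.
    replace (L + S (S m))%nat with (S (L + S m)) by lia.
    replace (S m + L)%nat with (L + S m)%nat by lia.
    rewrite !fact_S_INR, !S_INR, !plus_INR, !S_INR. simpl INR.
    pose proof (INR_fact_neq_0 m). pose proof (INR_fact_neq_0 (L + S m)). pose proof (pos_INR m).
    field. lra.
Qed.

Lemma B_as_term_sum (m0 : nat) (ms : list nat) : (1 <= m0)%nat ->
  B (m0 :: ms) = Rsum (map (term (weight m0) 0) (tuples ms)).
Proof.
  intro H. unfold B. simpl tuples. rewrite Rsum_flat_map.
  rewrite (Rsum_ext _ (fun x => Rsum (map (fun l => multinom (x :: l)) (tuples ms))))
    by (intros; rewrite map_map; reflexivity).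
  rewrite Rsum_swap. apply Rsum_ext. intros l _.
  rewrite (Rsum_ext _ (fun x => INR (fact (x + list_sum l)) / INR (fact x) * / dfact l)).
  - rewrite Rsum_scal_r. fold (sum_upto (fun x => INR (fact (x + list_sum l)) / INR (fact x)) m0).
    rewrite hockey_stick by exact H. reflexivity.
  - intros x _. unfold multinom, dfact, Rprod. simpl.
    unfold Rdiv. rewrite Rinv_mult. ring.
Qed.

(** If consecutive terms along each coordinate have
    ratio at most (resp. at least) U_m, then every term of the box is at most (resp. at
    least) the corner term times prod_j U_{m_j}^(m_j - 1 - l_j).  Both directions are
    handled at once through the oriented comparison [Rcmp up]. *)

Definition Rcmp (up : bool) (a b : R) : Prop := if up then a <= b else b <= a.

Lemma Rcmp_refl (up : bool) (a : R) : Rcmp up a a.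
Proof. destruct up; simpl; lra. Qed.

Lemma Rcmp_trans (up : bool) (a b c : R) : Rcmp up a b -> Rcmp up b c -> Rcmp up a c.
Proof. destruct up; simpl; lra. Qed.

Lemma Rcmp_mult_l (up : bool) (c a b : R) : 0 <= c -> Rcmp up a b -> Rcmp up (c * a) (c * b).
Proof. destruct up; simpl; intros; apply Rmult_le_compat_l; auto. Qed.

Lemma Rcmp_mult_r (up : bool) (c a b : R) : 0 <= c -> Rcmp up a b -> Rcmp up (a * c) (b * c).
Proof. rewrite !(Rmult_comm _ c). apply Rcmp_mult_l. Qed.

Lemma Rcmp_chain (up : bool) (g : nat -> R) (U : R) (lo m : nat) : 0 <= U ->
  (forall t, (lo <= t)%nat -> (S t < m)%nat -> Rcmp up (g t) (U * g (S t))) ->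
  forall x, (lo <= x < m)%nat -> Rcmp up (g x) (U ^ (m - 1 - x) * g (m - 1)%nat).
Proof.
  intros HU Hstep x Hx. remember (m - 1 - x)%nat as d eqn:Hd. revert x Hx Hd.
  induction d as [|d IH]; intros x Hx Hd.
  - replace (m - 1)%nat with x by lia. rewrite pow_O, Rmult_1_l. apply Rcmp_refl.
  - apply (Rcmp_trans _ _ (U * g (S x))); [apply Hstep; lia|].
    rewrite <- tech_pow_Rmult, Rmult_assoc. apply Rcmp_mult_l; [exact HU|].
    apply IH; lia.
Qed.

Lemma Rcmp_weight_step (up : bool) (w : nat -> R) (U : R) (K t : nat) :
  Rcmp up (w K * INR (S t)) (U * w (S K)) ->
  Rcmp up (w K / INR (fact t)) (U * (w (S K) / INR (fact (S t)))).
Proof.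
  intro H. pose proof (INR_fact_lt_0 t). assert (0 < INR (S t)) by (apply lt_0_INR; lia).
  replace (w K / INR (fact t)) with (w K * INR (S t) * / (INR (S t) * INR (fact t))) by (field; lra).
  replace (U * (w (S K) / INR (fact (S t)))) with (U * w (S K) * / (INR (S t) * INR (fact t)))
    by (rewrite fact_S_INR; field; lra).
  apply Rcmp_mult_r; [left; apply Rinv_0_lt_compat; nra | exact H].
Qed.

Lemma term_first_coordinate (w : nat -> R) (E y : nat) (l : list nat) :
  term w (E + y) l / INR (fact y) = w (E + list_sum l + y)%nat / INR (fact y) / dfact l.
Proof.
  unfold term. replace (E + y + list_sum l)%nat with (E + list_sum l + y)%nat by lia.
  pose proof (INR_fact_neq_0 y). pose proof (dfact_pos l). field. lra.
Qed.

(* The comparison itself, by induction on the number of coordinates; the ratio condition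
   is required only for coordinate sums K + 1 in the range [Lmin, Lmax] reached on the way. *)
Lemma term_vs_corner (up : bool) (w : nat -> R) (lo : nat -> nat) (U : nat -> R) (Lmin Lmax : nat) :
  (forall m, 0 <= U m) ->
  forall ms,
  (forall K t m, In m ms -> (lo m <= t)%nat -> (S t < m)%nat -> (t <= K)%nat ->
     (Lmin <= S K <= Lmax)%nat -> Rcmp up (w K * INR (S t)) (U m * w (S K))) ->
  forall E l, in_box lo l ms ->
  (Lmin <= E + list_sum (map lo ms) + 1)%nat -> (E + list_sum (map pred ms) <= Lmax)%nat ->
  Rcmp up (term w E l) (box_prod (fun x m => U m ^ (m - 1 - x)) l ms * term w E (map pred ms)).
Proof.
  intros HU ms. induction ms as [|m ms IH]; intros Hratio E l Hbox Hmin Hmax.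
  - destruct l; simpl in Hbox; [|tauto]. simpl. rewrite Rmult_1_l. apply Rcmp_refl.
  - destruct l as [|x l]; simpl in Hbox; [tauto|]. destruct Hbox as [Hx Hbox].
    pose proof (in_box_sum_bounds _ _ _ Hbox) as Hsums. simpl in Hmin, Hmax.
    set (E' := (E + list_sum (map pred ms))%nat).
    set (g := fun t => w (E' + t)%nat / INR (fact t)).
    set (P := box_prod (fun x m => U m ^ (m - 1 - x)) l ms).
    assert (HP : 0 <= P) by (apply box_prod_nonneg; intros; apply pow_le, HU).
    assert (Hdt := dfact_pos (map pred ms)).
    (* the remaining coordinates, by induction, with the first one frozen at x *)
    assert (Htail : Rcmp up (term w (E + x) l) (P * term w (E + x) (map pred ms))).
    { apply IH; auto with datatypes; lia. }
    (* the first coordinate, moved from x to its top value m - 1 *)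
    assert (Hhead : Rcmp up (g x) (U m ^ (m - 1 - x) * g (m - 1)%nat)).
    { apply (Rcmp_chain up g (U m) (lo m) m (HU m)); [|exact Hx].
      intros t Ht1 Ht2. unfold g. replace (E' + S t)%nat with (S (E' + t)) by lia.
      apply Rcmp_weight_step, Hratio; auto with datatypes; lia. }
    assert (Hshift : forall y, term w (E + y) (map pred ms) / INR (fact y) = g y / dfact (map pred ms))
      by (intro y; apply term_first_coordinate).
    rewrite term_cons. cbn [map box_prod]. rewrite term_cons.
    replace (Nat.pred m) with (m - 1)%nat by lia.
    apply (Rcmp_trans _ _ (P * term w (E + x) (map pred ms) / INR (fact x))).
    { unfold Rdiv. apply Rcmp_mult_r; [left; apply Rinv_0_lt_compat, INR_fact_lt_0|exact Htail]. }
    replace (P * term w (E + x) (map pred ms) / INR (fact x))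
      with (P * (term w (E + x) (map pred ms) / INR (fact x))) by (unfold Rdiv; ring).
    rewrite !Hshift. fold P.
    replace (U m ^ (m - 1 - x) * P * (g (m - 1)%nat / dfact (map pred ms)))
      with (P / dfact (map pred ms) * (U m ^ (m - 1 - x) * g (m - 1)%nat)) by (field; lra).
    replace (P * (g x / dfact (map pred ms))) with (P / dfact (map pred ms) * g x) by (field; lra).
    apply Rcmp_mult_l; [|exact Hhead].
    apply Rmult_le_pos; [exact HP|left; apply Rinv_0_lt_compat; exact Hdt].
Qed.

(** Raising the coordinate l_j = t by one in a tuple of
    coordinate sum K divides term (weight m0) by (t + 1)(K + 2) / ((K + 1)(K + 1 + m0)),
    i.e. by l (L + 1) / (L (L + m0)) with l = t + 1 and L = K + 1. *)

Lemma weight_shift (m0 K : nat) (c : R) :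
  weight m0 K * c = weight m0 (S K) * (c * (INR K + 2) / ((INR K + 1) * (INR K + 1 + INR m0))).
Proof.
  unfold weight. replace (S K + m0)%nat with (S (K + m0)) by lia.
  rewrite fact_S_INR, !plus_INR, !S_INR, !plus_INR. simpl INR.
  pose proof (INR_fact_lt_0 (m0 - 1)). pose proof (INR_fact_lt_0 (K + m0)).
  pose proof (pos_INR K). pose proof (pos_INR m0).
  field. repeat split; lra.
Qed.

Lemma weight_step_cmp (up : bool) (m0 K t : nat) (U : R) :
  Rcmp up (INR (S t) * (INR K + 2) / ((INR K + 1) * (INR K + 1 + INR m0))) U ->
  Rcmp up (weight m0 K * INR (S t)) (U * weight m0 (S K)).
Proof.
  intro H. rewrite weight_shift, (Rmult_comm U).
  apply Rcmp_mult_l; [left; apply weight_pos|exact H].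
Qed.

Lemma ratio_le_global (l L m m0 : R) : 1 <= l -> l <= L -> l + 1 <= m -> 1 <= m0 ->
  l * (L + 1) / (L * (L + m0)) <= m / (m + m0 - 1).
Proof.
  intros. apply Rle_trans with ((l + 1) / (l + m0)).
  - apply (Rmult_le_reg_r (L * (L + m0) * (l + m0))); [apply Rmult_lt_0_compat; nra|].
    field_simplify; try nra.
    assert (0 <= (L - l) * (l * L + L + l + m0)) by (apply Rmult_le_pos; nra). nra.
  - apply (Rmult_le_reg_r ((l + m0) * (m + m0 - 1))); [apply Rmult_lt_0_compat; nra|].
    assert (0 <= (m - l - 1) * (m0 - 1)) by (apply Rmult_le_pos; nra).
    field_simplify; nra.
Qed.

(* The ratio increases with l and decreases with L. *)
Lemma ratio_le_corner (l L m Lam m0 : R) : 0 <= l -> l <= m -> 1 <= Lam -> Lam <= L -> 1 <= m0 ->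
  l * (L + 1) / (L * (L + m0)) <= m * (Lam + 1) / (Lam * (Lam + m0)).
Proof.
  intros. apply (Rmult_le_reg_r (L * (L + m0) * (Lam * (Lam + m0)))).
  { repeat apply Rmult_lt_0_compat; nra. }
  field_simplify; try nra.
  assert (HL : (Lam + 1) * (L * (L + m0)) =
               (L + 1) * (Lam * (Lam + m0)) + (L - Lam) * (L * Lam + L + Lam + m0)) by ring.
  assert (0 <= (L - Lam) * (L * Lam + L + Lam + m0)) by (apply Rmult_le_pos; nra).
  assert (0 <= (L + 1) * (Lam * (Lam + m0))) by (repeat apply Rmult_le_pos; nra).
  assert (l * ((L + 1) * (Lam * (Lam + m0))) <= m * ((Lam + 1) * (L * (L + m0)))) by nra.
  nra.
Qed.

Lemma ratio_ge_low (a l L m0 M : R) : 0 <= a -> a <= l -> 1 <= L -> 1 <= m0 -> L + m0 <= M ->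
  a / M <= l * (L + 1) / (L * (L + m0)).
Proof.
  intros. apply Rle_trans with (l / (L + m0)).
  - apply (Rmult_le_reg_r (M * (L + m0))); [nra|]. field_simplify; nra.
  - apply (Rmult_le_reg_r (L * (L + m0))); [nra|]. field_simplify; nra.
Qed.

(* A tuple outside the window [m_j - b, m_j) has some coordinate at distance >= b from its
   corner, so damping every factor by th <= 1 gains at least th^b overall. *)
Lemma box_prod_outside_window (th v : R) (b : nat) (l ms : list nat) : 0 <= th <= 1 -> 0 <= v ->
  in_box (fun _ => 0%nat) l ms -> ~ in_box (fun m => m - b)%nat l ms ->
  box_prod (fun x m => (th * v) ^ (m - 1 - x)) l ms <= th ^ b * box_prod (fun x m => v ^ (m - 1 - x)) l ms.
Proof.
  intros Hth Hv. revert ms; induction l as [|x l IH]; destruct ms as [|m ms]; simpl; try tauto.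
  intros [Hx Hbox] Hout. rewrite Rpow_mult_distr.
  set (Pthv := box_prod (fun x m => (th * v) ^ (m - 1 - x)) l ms).
  set (Pv := box_prod (fun x m => v ^ (m - 1 - x)) l ms).
  assert (Hdamp : forall k, 0 <= (th * v) ^ k <= v ^ k).
  { intro k. rewrite Rpow_mult_distr. pose proof (pow_le v k Hv). pose proof (pow_le th k (proj1 Hth)).
    pose proof (pow_le_one th k Hth). split; nra. }
  assert (HPthv : 0 <= Pthv) by (apply box_prod_nonneg; intros; apply Hdamp).
  assert (HPv : Pthv <= Pv) by (apply box_prod_mono; intros; apply Hdamp).
  pose proof (pow_le th b (proj1 Hth)). pose proof (pow_le th (m - 1 - x) (proj1 Hth)).
  pose proof (pow_le v (m - 1 - x) Hv). pose proof (pow_le_one th (m - 1 - x) Hth).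
  destruct (le_lt_dec (m - b) x) as [Hin|Hfar].
  - (* the first coordinate is in the window, so the tail is not *)
    assert (Htail : Pthv <= th ^ b * Pv) by (apply IH; [exact Hbox|]; intro; apply Hout; split; [lia|auto]).
    apply Rle_trans with (v ^ (m - 1 - x) * (th ^ b * Pv)); [|lra].
    apply Rmult_le_compat; nra.
  - (* the first coordinate is at distance m - 1 - x >= b from the corner *)
    assert (th ^ (m - 1 - x) <= th ^ b) by (apply pow_antimono; [lra|lia]).
    apply Rle_trans with (th ^ b * v ^ (m - 1 - x) * Pv); [|lra].
    apply Rmult_le_compat; nra.
Qed.

Definition window_weight (b : nat) (q : nat -> R) (x m : nat) : R :=
  if (m - b <=? x)%nat then q m ^ (m - 1 - x) else 0.

Lemma box_prod_window_in (b : nat) (q : nat -> R) (l ms : list nat) :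
  in_box (fun m => m - b)%nat l ms ->
  box_prod (window_weight b q) l ms = box_prod (fun x m => q m ^ (m - 1 - x)) l ms.
Proof.
  revert ms; induction l as [|x l IH]; destruct ms as [|m ms]; simpl; try tauto.
  intros [Hx Hl]. rewrite IH by exact Hl. unfold window_weight.
  destruct (Nat.leb_spec (m - b) x); [reflexivity|lia].
Qed.

Lemma box_prod_window_out (b : nat) (q : nat -> R) (l ms : list nat) :
  in_box (fun _ => 0%nat) l ms -> ~ in_box (fun m => m - b)%nat l ms ->
  box_prod (window_weight b q) l ms = 0.
Proof.
  revert ms; induction l as [|x l IH]; destruct ms as [|m ms]; simpl; try tauto.
  intros [Hx Hl] Hout. unfold window_weight at 1. destruct (Nat.leb_spec (m - b) x).
  - rewrite IH; [ring|exact Hl|]. intro; apply Hout; split; [lia|auto].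
  - ring.
Qed.

(** Inside the window of width b
    at the corner the term ratios are at most corner_ratio m (and at least low_ratio m);
    outside it they are uniformly at most th v < 1, which makes the rest negligible. *)

Section CornerBounds.
Variables (m0 b : nat) (ms : list nat).
Hypothesis Hm0 : (1 <= m0)%nat.

Definition low_sum : nat := list_sum (map (fun m => m - b)%nat ms).
(* upper (resp. lower) bound for the term ratios along coordinate m inside the window *)
Definition corner_ratio (m : nat) : R :=
  INR m * (INR low_sum + 1) / (INR low_sum * (INR low_sum + INR m0)).
Definition low_ratio (m : nat) : R := INR (m - b) / INR (m0 + list_sum ms).
Definition corner : R := term (weight m0) 0 (map pred ms).

Lemma corner_pos : 0 < corner.
Proof. apply term_weight_pos. Qed.

Lemma corner_ratio_nonneg (m : nat) : (1 <= low_sum)%nat -> 0 <= corner_ratio m.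
Proof.
  intro Hlow. unfold corner_ratio. assert (1 <= INR low_sum) by (apply (le_INR 1); lia).
  apply Rmult_le_pos; [apply Rmult_le_pos; [apply pos_INR|lra]|].
  left. apply Rinv_0_lt_compat. pose proof (pos_INR m0). nra.
Qed.

Lemma term_le_in_window (l : list nat) : (1 <= low_sum)%nat -> in_box (fun m => m - b)%nat l ms ->
  term (weight m0) 0 l <= box_prod (fun x m => corner_ratio m ^ (m - 1 - x)) l ms * corner.
Proof.
  intros Hlow Hl.
  apply (term_vs_corner true (weight m0) (fun m => m - b)%nat corner_ratio low_sum
           (list_sum (map pred ms))); auto; try (unfold low_sum; lia).
  - intro m. apply corner_ratio_nonneg. exact Hlow.
  - intros K t m _ Ht1 Ht2 Ht3 HK. apply weight_step_cmp. cbn [Rcmp]. unfold corner_ratio.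
    replace (INR K + 2) with (INR (S K) + 1) by (rewrite S_INR; ring).
    replace (INR K + 1) with (INR (S K)) by (rewrite S_INR; ring).
    apply ratio_le_corner.
    + apply pos_INR.
    + apply le_INR. lia.
    + apply (le_INR 1). exact Hlow.
    + apply le_INR. lia.
    + apply (le_INR 1). exact Hm0.
Qed.

Lemma term_le_outside_window (th v : R) (l : list nat) :
  (forall m, In m ms -> INR m / (INR m + INR m0 - 1) <= th * v) -> 0 <= th <= 1 -> 0 <= v ->
  in_box (fun _ => 0%nat) l ms -> ~ in_box (fun m => m - b)%nat l ms ->
  term (weight m0) 0 l <= th ^ b * box_prod (fun x m => v ^ (m - 1 - x)) l ms * corner.
Proof.
  intros Hglob Hth Hv Hl Hout.
  apply Rle_trans with (box_prod (fun x m => (th * v) ^ (m - 1 - x)) l ms * corner).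
  - apply (term_vs_corner true (weight m0) (fun _ => 0%nat) (fun _ => th * v) 0
             (list_sum (map pred ms))); auto; [intro; nra| |lia].
    intros K t m Hm Ht1 Ht2 Ht3 HK. apply weight_step_cmp.
    cbn [Rcmp]. eapply Rle_trans; [|apply (Hglob m Hm)].
    replace (INR K + 2) with (INR (S K) + 1) by (rewrite S_INR; ring).
    replace (INR K + 1) with (INR (S K)) by (rewrite S_INR; ring).
    apply ratio_le_global.
    + apply (le_INR 1). lia.
    + apply le_INR. lia.
    + rewrite <- S_INR. apply le_INR. lia.
    + apply (le_INR 1). exact Hm0.
  - apply Rmult_le_compat_r; [left; apply corner_pos|].
    apply box_prod_outside_window; auto.
Qed.

Lemma term_ge_in_window (l : list nat) : in_box (fun m => m - b)%nat l ms ->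
  box_prod (fun x m => low_ratio m ^ (m - 1 - x)) l ms * corner <= term (weight m0) 0 l.
Proof.
  intro Hl. assert (Htot : 0 < INR (m0 + list_sum ms)) by (apply lt_0_INR; lia).
  apply (term_vs_corner false (weight m0) (fun m => m - b)%nat low_ratio 0 (list_sum (map pred ms)));
    auto; try lia.
  - intro m. unfold low_ratio. apply Rmult_le_pos; [apply pos_INR|left; apply Rinv_0_lt_compat; lra].
  - intros K t m _ Ht1 Ht2 Ht3 HK. apply weight_step_cmp. cbn [Rcmp]. unfold low_ratio.
    replace (INR K + 2) with (INR (S K) + 1) by (rewrite S_INR; ring).
    replace (INR K + 1) with (INR (S K)) by (rewrite S_INR; ring).
    assert (Hpred : (list_sum (map pred ms) <= list_sum ms)%nat).
    { clear. induction ms as [|m ms' IH]; simpl; lia. }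
    apply ratio_ge_low.
    + apply pos_INR.
    + apply le_INR. lia.
    + apply (le_INR 1). lia.
    + apply (le_INR 1). exact Hm0.
    + rewrite <- plus_INR. apply le_INR. lia.
Qed.

(* Upper bound: the window contributes at most the product of full geometric series in
   corner_ratio, the rest at most th^b times geometric series in v. *)
Theorem B_upper (th v : R) : (1 <= low_sum)%nat ->
  (forall m, In m ms -> corner_ratio m < 1) ->
  (forall m, In m ms -> INR m / (INR m + INR m0 - 1) <= th * v) ->
  0 <= th <= 1 -> 0 <= v < 1 ->
  B (m0 :: ms) <= corner * (Rprod (map (fun m => 1 / (1 - corner_ratio m)) ms)
                            + th ^ b * (1 / (1 - v)) ^ length ms).
Proof.
  intros Hlow Hcr Hglob Hth Hv.
  assert (Hcr0 : forall m, 0 <= corner_ratio m) by (intro; apply corner_ratio_nonneg, Hlow).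
  pose proof corner_pos.
  set (Pc := fun l => box_prod (fun x m => corner_ratio m ^ (m - 1 - x)) l ms).
  set (Pv := fun l => box_prod (fun x m => v ^ (m - 1 - x)) l ms).
  rewrite B_as_term_sum by exact Hm0.
  apply Rle_trans with (Rsum (map (fun l => corner * (Pc l + th ^ b * Pv l)) (tuples ms))).
  - apply Rsum_le. intros l Hl. apply tuples_in_box in Hl.
    assert (0 <= Pc l) by (apply box_prod_nonneg; intros; apply pow_le; auto).
    assert (0 <= th ^ b * Pv l) by (apply Rmult_le_pos; [apply pow_le|apply box_prod_nonneg;
      intros; apply pow_le]; lra).
    destruct (in_box_dec (fun m => m - b)%nat l ms) as [Hin|Hout].
    + pose proof (term_le_in_window l Hlow Hin). fold (Pc l) in *. nra.
    + pose proof (term_le_outside_window th v l Hglob Hth (proj1 Hv) Hl Hout). fold (Pv l) in *. nra.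
  - rewrite Rsum_scal_l, Rsum_plus, Rsum_scal_l. unfold Pc, Pv. rewrite !sum_tuples_box_prod.
    apply Rmult_le_compat_l; [lra|]. apply Rplus_le_compat.
    + apply Rprod_le. intros m Hm.
      rewrite (sum_upto_rev (fun k => corner_ratio m ^ k) m). split.
      * apply sum_upto_nonneg. intros; apply pow_le; auto.
      * apply geometric_sum_le. split; auto.
    + rewrite <- (Rprod_const _ ms).
      apply Rmult_le_compat_l; [apply pow_le; lra|]. apply Rprod_le. intros m Hm.
      rewrite (sum_upto_rev (fun k => v ^ k) m). split.
      * apply sum_upto_nonneg. intros; apply pow_le; lra.
      * apply geometric_sum_le. lra.
Qed.

(* Lower bound: keep only the window, where the terms are at least geometric in low_ratio. *)
Theorem B_lower : (forall m, In m ms -> (b <= m)%nat) ->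
  corner * Rprod (map (fun m => sum_upto (pow (low_ratio m)) b) ms) <= B (m0 :: ms).
Proof.
  intros Hb.
  rewrite B_as_term_sum by exact Hm0.
  apply Rle_trans with (Rsum (map (fun l => corner * box_prod (window_weight b low_ratio) l ms) (tuples ms))).
  - rewrite Rsum_scal_l, sum_tuples_box_prod. right. f_equal. apply Rprod_ext. intros m Hm.
    symmetry. apply geometric_sum_last. auto.
  - apply Rsum_le. intros l Hl. apply tuples_in_box in Hl.
    destruct (in_box_dec (fun m => m - b)%nat l ms) as [Hin|Hout].
    + rewrite box_prod_window_in, Rmult_comm by exact Hin. apply term_ge_in_window. exact Hin.
    + rewrite box_prod_window_out, Rmult_0_r by assumption. left. apply term_weight_pos.
Qed.
End CornerBounds.

Lemma fact_add_INR (a d : nat) :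
  INR (fact (a + d)) = INR (fact a) * Rprod (map (fun i => INR (a + 1 + i)) (seq 0 d)).
Proof.
  induction d as [|d IH].
  - rewrite Nat.add_0_r. unfold Rprod; simpl. ring.
  - rewrite seq_S, map_app, Rprod_app, <- Rmult_assoc, <- IH.
    replace (a + S d)%nat with (S (a + d)) by lia. rewrite fact_S_INR.
    unfold Rprod; cbn [map fold_right]. replace (a + 1 + (0 + d))%nat with (S (a + d)) by lia. ring.
Qed.

Lemma dfact_pred (ms : list nat) : (forall m, In m ms -> (1 <= m)%nat) ->
  dfact ms = Rprod (map INR ms) * dfact (map pred ms).
Proof.
  intro H. unfold dfact. rewrite map_map, <- Rprod_mult. apply Rprod_ext.
  intros m Hm. specialize (H m Hm). destruct m as [|m]; [lia|]. apply fact_S_INR.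
Qed.

Lemma list_sum_pred (ms : list nat) : (forall m, In m ms -> (1 <= m)%nat) ->
  list_sum ms = (list_sum (map pred ms) + length ms)%nat.
Proof.
  induction ms as [|m ms IH]; intro H; simpl; [reflexivity|].
  rewrite IH by auto with datatypes. specialize (H m (or_introl eq_refl)). lia.
Qed.

Definition approx_factor (m0 : nat) (ms : list nat) : R :=
  INR (list_sum (map pred ms) + 1)
  * Rprod (map (fun i => INR (list_sum (map pred ms) + m0 + 1 + i)) (seq 0 (length ms)))
  / Rprod (map (fun m => INR (m0 + list_sum ms) - INR m) (m0 :: ms)).

Lemma Bapprox_factor (m0 : nat) (ms : list nat) : (1 <= m0)%nat -> (forall m, In m ms -> (1 <= m)%nat) ->
  Bapprox (m0 :: ms) = corner m0 ms * approx_factor m0 ms.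
Proof.
  intros Hm0 Hms. unfold Bapprox, corner, approx_factor, term, weight. simpl list_sum.
  (* the denominator is kept opaque: it vanishes when ms is empty *)
  set (Den := Rprod (map (fun m => INR (m0 + list_sum ms) - INR m) (m0 :: ms))).
  change (Rprod (map (fun x => INR (fact x)) (m0 :: ms))) with (INR (fact m0) * dfact ms).
  change (Rprod (map INR (m0 :: ms))) with (INR m0 * Rprod (map INR ms)).
  rewrite dfact_pred by exact Hms.
  rewrite (list_sum_pred ms Hms), !Nat.add_0_l.
  replace (m0 + (list_sum (map pred ms) + length ms))%nat
    with ((list_sum (map pred ms) + m0) + length ms)%nat by lia.
  rewrite fact_add_INR. simpl (0 + _)%nat.
  destruct m0 as [|k]; [lia|]. rewrite fact_S_INR. replace (S k - 1)%nat with k by lia.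
  assert (0 < Rprod (map INR ms)) by (apply Rprod_pos; intros x Hx; apply lt_0_INR; specialize (Hms x Hx); lia).
  pose proof (dfact_pos (map pred ms)). pose proof (INR_fact_lt_0 k).
  pose proof (INR_fact_lt_0 (list_sum (map pred ms) + S k)).
  assert (0 < INR (S k)) by (apply lt_0_INR; lia).
  assert (0 < INR (list_sum (map pred ms) + 1)) by (apply lt_0_INR; lia).
  unfold Rdiv. set (invDen := / Den). field. repeat split; lra.
Qed.

Definition tends (f : R -> R) (c : R) : Prop := is_lim f p_infty c.

Lemma eventually_forall_list {A} (l : list A) (P : A -> R -> Prop) :
  (forall a, In a l -> Rbar_locally p_infty (P a)) ->
  Rbar_locally p_infty (fun n => forall a, In a l -> P a n).
Proof.
  induction l as [|a l IH]; intro H.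
  - apply filter_forall. intros n x [].
  - apply (filter_imp (fun n => P a n /\ forall b, In b l -> P b n)).
    + intros n [Ha Hl] b [<-|Hb]; auto.
    + apply filter_and; auto with datatypes.
Qed.

Lemma eventually_ge (c : R) : Rbar_locally p_infty (fun n => c <= n).
Proof. exists c. intros. lra. Qed.

Lemma eventually_linear_ge (a c : R) : 0 < a -> Rbar_locally p_infty (fun n => c <= a * n).
Proof.
  intro Ha. apply (filter_imp (fun n => c / a <= n)); [|apply eventually_ge].
  intros n Hn. apply (Rmult_le_compat_l a) in Hn; [|lra].
  replace (a * (c / a)) with c in Hn by (field; lra). exact Hn.
Qed.

Lemma tends_eventually_lt (f : R -> R) (c d : R) : tends f c -> c < d -> Rbar_locally p_infty (fun n => f n < d).
Proof.
  intros H Hd. apply is_lim_spec in H. destruct (H (mkposreal (d - c) ltac:(lra))) as [M HM].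
  exists M. intros n Hn. specialize (HM n Hn). simpl in HM. apply Rabs_def2 in HM. lra.
Qed.

Lemma tends_eventually_gt (f : R -> R) (c d : R) : tends f c -> d < c -> Rbar_locally p_infty (fun n => d < f n).
Proof.
  intros H Hd. apply is_lim_spec in H. destruct (H (mkposreal (c - d) ltac:(lra))) as [M HM].
  exists M. intros n Hn. specialize (HM n Hn). simpl in HM. apply Rabs_def2 in HM. lra.
Qed.

Lemma tends_ext (f g : R -> R) (c : R) : Rbar_locally p_infty (fun n => f n = g n) -> tends f c -> tends g c.
Proof. intros. apply (is_lim_ext_loc f g); assumption. Qed.

Lemma tends_const (c : R) : tends (fun _ => c) c.
Proof. apply is_lim_const. Qed.

Lemma tends_plus (f g : R -> R) (a b : R) : tends f a -> tends g b -> tends (fun n => f n + g n) (a + b).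
Proof. intros. eapply is_lim_plus; eauto. reflexivity. Qed.

Lemma tends_minus (f g : R -> R) (a b : R) : tends f a -> tends g b -> tends (fun n => f n - g n) (a - b).
Proof. intros. eapply is_lim_minus; eauto. reflexivity. Qed.

Lemma tends_mult (f g : R -> R) (a b : R) : tends f a -> tends g b -> tends (fun n => f n * g n) (a * b).
Proof. intros. apply (is_lim_mult f g p_infty a b); auto. exact I. Qed.

Lemma tends_div (f g : R -> R) (a b : R) :
  tends f a -> tends g b -> b <> 0 -> tends (fun n => f n / g n) (a / b).
Proof.
  intros Hf Hg Hb. apply tends_mult; [exact Hf|].
  apply (is_lim_inv g p_infty b Hg). intro E. injection E. exact Hb.
Qed.

Lemma tends_affine_inv (a c : R) : tends (fun n => a - c * / n) a.
Proof.
  assert (Hinv : tends (fun n => / n) 0).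
  { unfold tends. replace (Finite 0) with (Rbar_inv p_infty) by reflexivity.
    apply is_lim_inv; [apply is_lim_id|discriminate]. }
  pose proof (tends_minus _ _ _ _ (tends_const a) (tends_mult _ _ _ _ (tends_const c) Hinv)) as H.
  rewrite Rmult_0_r, Rminus_0_r in H. exact H.
Qed.

Lemma tends_Rprod {A} (l : list A) (f : A -> R -> R) (c : A -> R) :
  (forall a, In a l -> tends (f a) (c a)) ->
  tends (fun n => Rprod (map (fun a => f a n) l)) (Rprod (map c l)).
Proof.
  induction l as [|a l IH]; intro H; unfold Rprod; simpl.
  - apply tends_const.
  - apply tends_mult; auto with datatypes.
Qed.

Lemma tends_pow (f : R -> R) (c : R) (k : nat) : tends f c -> tends (fun n => f n ^ k) (c ^ k).
Proof. intro H. induction k as [|k IH]; [apply tends_const|apply tends_mult; auto]. Qed.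

Lemma tends_geometric_sum (f : R -> R) (c : R) (b : nat) :
  tends f c -> tends (fun n => sum_upto (pow (f n)) b) (sum_upto (pow c) b).
Proof.
  intro H. induction b as [|b IH].
  - apply tends_const.
  - apply (tends_ext (fun n => sum_upto (pow (f n)) b + f n ^ b)).
    + apply filter_forall. intro n. rewrite sum_upto_S. reflexivity.
    + rewrite sum_upto_S. apply tends_plus; [exact IH|apply tends_pow, H].
Qed.

Lemma INR_list_sum_map {A} (f : A -> nat) (g : A -> R) (l : list A) :
  (forall x, In x l -> INR (f x) = g x) -> INR (list_sum (map f l)) = Rsum (map g l).
Proof. intro H. rewrite INR_list_sum, map_map. apply Rsum_ext. exact H. Qed.

(** Specialisation to m_j = alpha_j n.  Coordinate 0 plays the role of m0 and the others
    j in [1, K) form ms; every quantity in the bounds becomes an explicit function of n. *)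

Section Specialisation.
Variables (K : nat) (alpha : nat -> R).

Definition others : list nat := seq 1 (K - 1).
Definition total_rate : R := Rsum (map alpha (seq 0 K)).
Definition others_rate : R := Rsum (map alpha others).
(* (K - 1) b, the total distance from the corner to the lower window corner *)
Definition window_shift (b : nat) : R := INR (K - 1) * INR b.

(* corner_ratio, the bound m_j / (m_j + m0 - 1) on all ratios, low_ratio, the two sides of
   the estimate of B / corner, and approx_factor, all evaluated at m_j = alpha_j n *)
Definition corner_ratio_at (b j : nat) (n : R) : R :=
  alpha j * n * (others_rate * n - window_shift b + 1)
  / ((others_rate * n - window_shift b) * (others_rate * n - window_shift b + alpha 0%nat * n)).
Definition global_ratio_at (j : nat) (n : R) : R :=
  alpha j * n / (alpha j * n + alpha 0%nat * n - 1).
Definition lower_sum_at (b : nat) (n : R) : R :=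
  Rprod (map (fun j => sum_upto (pow ((alpha j * n - INR b) / (total_rate * n))) b) others).
Definition upper_sum_at (b : nat) (th v n : R) : R :=
  Rprod (map (fun j => 1 / (1 - corner_ratio_at b j n)) others)
  + th ^ b * (1 / (1 - v)) ^ (K - 1).
Definition approx_factor_at (n : R) : R :=
  (others_rate * n - INR (K - 1) + 1)
  * Rprod (map (fun i => others_rate * n - INR (K - 1) + alpha 0%nat * n + 1 + INR i) (seq 0 (K - 1)))
  / Rprod (map (fun j => total_rate * n - alpha j * n) (seq 0 K)).

Lemma seq_0_others : (1 <= K)%nat -> seq 0 K = 0%nat :: others.
Proof. intro H. unfold others. destruct K; [lia|]. simpl. rewrite Nat.sub_0_r. reflexivity. Qed.

Lemma total_rate_split : (1 <= K)%nat -> total_rate = alpha 0%nat + others_rate.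
Proof. intro H. unfold total_rate, others_rate. rewrite seq_0_others by exact H. reflexivity. Qed.

Lemma in_others (j : nat) : In j others -> (1 <= j < K)%nat.
Proof. unfold others. intro Hj. apply in_seq in Hj. lia. Qed.

Lemma length_others : length others = (K - 1)%nat.
Proof. apply length_seq. Qed.

Section AtScale.
Variables (n : R) (m : nat -> nat).
Hypothesis hK : (2 <= K)%nat.
Hypothesis hm : forall j, (j < K)%nat -> (0 < m j)%nat /\ INR (m j) = alpha j * n.

Let ms : list nat := map m others.

Lemma INR_m (j : nat) : In j others -> INR (m j) = alpha j * n.
Proof. intro Hj. apply hm. pose proof (in_others j Hj). lia. Qed.

Lemma total_at_scale : INR (m 0%nat + list_sum ms) = total_rate * n.
Proof.
  rewrite plus_INR, (proj2 (hm 0%nat ltac:(lia))), total_rate_split by lia. unfold ms.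
  rewrite (INR_list_sum_map m (fun j => alpha j * n)) by exact INR_m.
  rewrite Rsum_scal_r. unfold others_rate. ring.
Qed.

Lemma pred_sum_at_scale : INR (list_sum (map pred ms)) = others_rate * n - INR (K - 1).
Proof.
  unfold ms. rewrite map_map, (INR_list_sum_map _ (fun j => alpha j * n - 1)).
  - rewrite Rsum_minus, Rsum_scal_r, Rsum_const, length_others. unfold others_rate. ring.
  - intros j Hj. pose proof (in_others j Hj). pose proof (hm j ltac:(lia)).
    replace (pred (m j)) with (m j - 1)%nat by lia. rewrite minus_INR by lia.
    rewrite INR_m by exact Hj. reflexivity.
Qed.

Lemma low_sum_at_scale (b : nat) : (forall j, In j others -> INR b <= alpha j * n) ->
  INR (low_sum b ms) = others_rate * n - window_shift b.
Proof.
  intro Hb. unfold low_sum, ms. rewrite map_map, (INR_list_sum_map _ (fun j => alpha j * n - INR b)).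
  - rewrite Rsum_minus, Rsum_scal_r, Rsum_const, length_others. unfold others_rate, window_shift. ring.
  - intros j Hj. assert (Hbj : (b <= m j)%nat) by (apply INR_le; rewrite INR_m by exact Hj; auto).
    rewrite minus_INR, INR_m by assumption. reflexivity.
Qed.

Lemma approx_factor_at_scale : approx_factor (m 0%nat) ms = approx_factor_at n.
Proof.
  unfold approx_factor, approx_factor_at.
  rewrite plus_INR, pred_sum_at_scale. unfold ms at 2. rewrite length_map, length_others.
  f_equal; [f_equal|].
  - apply Rprod_ext. intros i _. rewrite !plus_INR, pred_sum_at_scale, (proj2 (hm 0%nat ltac:(lia))).
    simpl (INR 1). ring.
  - rewrite seq_0_others by lia. fold ms. cbn [map]. rewrite total_at_scale.
    unfold Rprod. cbn [map fold_right]. rewrite (proj2 (hm 0%nat ltac:(lia))). f_equal.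
    unfold ms. rewrite map_map. f_equal. apply map_ext_in. intros j Hj. rewrite INR_m by exact Hj. reflexivity.
Qed.

Lemma window_fits (b : nat) : (forall j, In j others -> INR b <= alpha j * n) ->
  forall x, In x ms -> (b <= x)%nat.
Proof.
  unfold ms. intros Hbn x Hx. apply in_map_iff in Hx. destruct Hx as [j [<- Hj]].
  apply INR_le. rewrite INR_m by exact Hj. auto.
Qed.

Lemma corner_ratio_at_scale (b j : nat) : (forall j, In j others -> INR b <= alpha j * n) ->
  In j others -> corner_ratio (m 0%nat) b ms (m j) = corner_ratio_at b j n.
Proof.
  intros Hbn Hj. unfold corner_ratio, corner_ratio_at. rewrite low_sum_at_scale, INR_m by assumption.
  rewrite (proj2 (hm 0%nat ltac:(lia))). reflexivity.
Qed.

Lemma B_upper_at_scale (b : nat) (th v : R) :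
  (forall j, In j others -> INR b <= alpha j * n) ->
  1 <= others_rate * n - window_shift b ->
  (forall j, In j others -> corner_ratio_at b j n < 1) ->
  (forall j, In j others -> global_ratio_at j n <= th * v) ->
  0 <= th <= 1 -> 0 <= v < 1 ->
  B (m 0%nat :: ms) <= corner (m 0%nat) ms * upper_sum_at b th v n.
Proof.
  intros Hbn Hlow Hcr Hglob Hth Hv. unfold upper_sum_at. rewrite <- length_others.
  replace (length others) with (length ms) by apply length_map.
  replace (Rprod (map (fun j => 1 / (1 - corner_ratio_at b j n)) others))
    with (Rprod (map (fun x => 1 / (1 - corner_ratio (m 0%nat) b ms x)) ms)).
  - apply B_upper; auto; [| |unfold ms; intros x Hx; apply in_map_iff in Hx; destruct Hx as [j [<- Hj]]..].
    + apply hm. lia.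
    + apply INR_le. rewrite low_sum_at_scale by exact Hbn. simpl. lra.
    + rewrite corner_ratio_at_scale; auto.
    + rewrite INR_m, (proj2 (hm 0%nat ltac:(lia))) by exact Hj. apply Hglob. exact Hj.
  - unfold ms. rewrite map_map. apply Rprod_ext. intros j Hj. rewrite corner_ratio_at_scale; auto.
Qed.

Lemma B_lower_at_scale (b : nat) : (forall j, In j others -> INR b <= alpha j * n) ->
  corner (m 0%nat) ms * lower_sum_at b n <= B (m 0%nat :: ms).
Proof.
  intro Hbn. unfold lower_sum_at. replace (Rprod (map _ others))
    with (Rprod (map (fun x => sum_upto (pow (low_ratio (m 0%nat) b ms x)) b) ms)).
  - apply B_lower; [apply hm; lia|apply window_fits, Hbn].
  - unfold ms. rewrite map_map. apply Rprod_ext. intros j Hj. unfold low_ratio.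
    assert (Hbj : (b <= m j)%nat) by (apply (window_fits b Hbn); unfold ms; apply in_map; exact Hj).
    rewrite minus_INR, INR_m by assumption. fold ms. rewrite total_at_scale. reflexivity.
Qed.

Theorem B_ratio_bounds (b : nat) (th v : R) :
  (forall j, In j others -> INR b <= alpha j * n) ->
  1 <= others_rate * n - window_shift b ->
  (forall j, In j others -> corner_ratio_at b j n < 1) ->
  (forall j, In j others -> global_ratio_at j n <= th * v) ->
  0 <= th <= 1 -> 0 <= v < 1 -> 0 < approx_factor_at n ->
  lower_sum_at b n / approx_factor_at n <= B (map m (seq 0 K)) / Bapprox (map m (seq 0 K))
  <= upper_sum_at b th v n / approx_factor_at n.
Proof.
  intros Hbn Hlow Hcr Hglob Hth Hv HQ.
  assert (Hfactor : Bapprox (m 0%nat :: ms) = corner (m 0%nat) ms * approx_factor_at n).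
  { rewrite Bapprox_factor, approx_factor_at_scale; [reflexivity|apply hm; lia|].
    unfold ms. intros x Hx. apply in_map_iff in Hx. destruct Hx as [j [<- Hj]].
    pose proof (in_others j Hj). apply hm. lia. }
  pose proof (B_upper_at_scale b th v Hbn Hlow Hcr Hglob Hth Hv).
  pose proof (B_lower_at_scale b Hbn).
  rewrite seq_0_others by lia. change (map m (0%nat :: others)) with (m 0%nat :: ms). rewrite Hfactor.
  pose proof (corner_pos (m 0%nat) ms).
  split; apply (Rmult_le_reg_r (corner (m 0%nat) ms * approx_factor_at n));
    try (apply Rmult_lt_0_compat; auto); field_simplify; lra.
Qed.
End AtScale.
End Specialisation.

(** With A = alpha_0 + ... + alpha_(K-1), every ratio
    tends to alpha_j / A (or alpha_j / (alpha_j + alpha_0) for the global one), all below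
    q = 1 - alpha_0 / A < 1, and approx_factor_at tends to prod_(j >= 1) 1 / (1 - alpha_j / A). *)

Section Limits.
Variables (K : nat) (alpha : nat -> R).
Hypothesis hK : (2 <= K)%nat.
Hypothesis halpha : forall j, (j < K)%nat -> 0 < alpha j.

Lemma alpha0_pos : 0 < alpha 0%nat.
Proof. apply halpha. lia. Qed.

Lemma alpha_others (j : nat) : In j (others K) -> 0 < alpha j <= others_rate K alpha.
Proof.
  intro Hj. pose proof (in_others K j Hj). split; [apply halpha; lia|].
  apply Rsum_ge_elt; [exact Hj|]. intros y Hy. pose proof (in_others K y Hy). left; apply halpha; lia.
Qed.

Lemma others_rate_pos : 0 < others_rate K alpha.
Proof.
  assert (H1 : In 1%nat (others K)) by (unfold others; apply in_seq; lia).
  pose proof (alpha_others 1 H1). lra.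
Qed.

Lemma total_rate_eq : total_rate K alpha = alpha 0%nat + others_rate K alpha.
Proof. apply total_rate_split. lia. Qed.

Lemma total_rate_pos : 0 < total_rate K alpha.
Proof. rewrite total_rate_eq. pose proof alpha0_pos. pose proof others_rate_pos. lra. Qed.

Lemma total_minus_alpha_pos (j : nat) : (j < K)%nat -> 0 < total_rate K alpha - alpha j.
Proof.
  intro Hj. rewrite total_rate_eq. destruct j as [|j].
  - pose proof others_rate_pos. lra.
  - assert (H : In (S j) (others K)) by (unfold others; apply in_seq; lia).
    pose proof (alpha_others _ H). pose proof alpha0_pos. lra.
Qed.

(* the common bound q = 1 - alpha_0 / A on all limiting ratios *)
Definition ratio_bound : R := others_rate K alpha / total_rate K alpha.

Lemma ratio_bound_lt_1 : 0 <= ratio_bound < 1.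
Proof.
  pose proof others_rate_pos. pose proof total_rate_pos. pose proof alpha0_pos. pose proof total_rate_eq.
  unfold ratio_bound. split; [apply Rlt_le, Rdiv_lt_0_compat; lra|].
  apply (Rmult_lt_reg_r (total_rate K alpha)); [lra|]. field_simplify; lra.
Qed.

Lemma share_le_ratio_bound (j : nat) : In j (others K) -> 0 < alpha j / total_rate K alpha <= ratio_bound.
Proof.
  intro Hj. pose proof (alpha_others j Hj). pose proof total_rate_pos.
  split; [apply Rdiv_lt_0_compat; lra|]. unfold ratio_bound, Rdiv. apply Rmult_le_compat_r; [|lra].
  left; apply Rinv_0_lt_compat; lra.
Qed.

Lemma pair_share_le_ratio_bound (j : nat) : In j (others K) ->
  alpha j / (alpha j + alpha 0%nat) <= ratio_bound.
Proof.
  intro Hj. pose proof (alpha_others j Hj). pose proof alpha0_pos. pose proof others_rate_pos.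
  unfold ratio_bound. rewrite total_rate_eq.
  apply (Rmult_le_reg_r ((alpha j + alpha 0%nat) * (alpha 0%nat + others_rate K alpha))).
  { apply Rmult_lt_0_compat; lra. }
  field_simplify; nra.
Qed.

Definition limit_factor : R :=
  Rprod (map (fun j => 1 / (1 - alpha j / total_rate K alpha)) (others K)).

Lemma limit_factor_ge_1 : 1 <= limit_factor.
Proof.
  apply Rprod_ge1. intros j Hj. pose proof (share_le_ratio_bound j Hj). pose proof ratio_bound_lt_1.
  unfold Rdiv at 1. rewrite Rmult_1_l, <- Rinv_1 at 1. apply Rinv_le_contravar; lra.
Qed.

Lemma tends_corner_ratio_at (b j : nat) : In j (others K) ->
  tends (corner_ratio_at K alpha b j) (alpha j / total_rate K alpha).
Proof.
  intro Hj. pose proof others_rate_pos. pose proof total_rate_pos. pose proof total_rate_eq as HA.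
  set (A1 := others_rate K alpha) in *. set (A := total_rate K alpha) in *.
  set (c := window_shift K b).
  apply (tends_ext (fun n => alpha j * (A1 - (c - 1) * / n) / ((A1 - c * / n) * (A - c * / n)))).
  - apply (filter_imp (fun n => 1 <= n /\ 0 < A1 - c * / n /\ 0 < A - c * / n)).
    + intros n (Hn & Hp1 & Hp2). unfold corner_ratio_at. fold A1 c.
      replace (A1 * n - c + 1) with (n * (A1 - (c - 1) * / n)) by (field; lra).
      replace (A1 * n - c + alpha 0%nat * n) with (n * (A - c * / n)) by (rewrite HA; field; lra).
      replace (A1 * n - c) with (n * (A1 - c * / n)) by (field; lra).
      assert (0 < n * (A1 - c * / n)) by (apply Rmult_lt_0_compat; lra).
      assert (0 < n * (A - c * / n)) by (apply Rmult_lt_0_compat; lra).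
      assert (A1 * n - c = n * (A1 - c * / n)) by (field; lra).
      assert (A * n - c = n * (A - c * / n)) by (field; lra).
      field. repeat split; lra.
    + repeat apply filter_and; [apply eventually_ge|apply (tends_eventually_gt _ A1)|
        apply (tends_eventually_gt _ A)]; try apply tends_affine_inv; lra.
  - replace (alpha j / A) with (alpha j * A1 / (A1 * A)) by (field; lra).
    apply tends_div; [apply tends_mult; [apply tends_const|apply tends_affine_inv]| |nra].
    apply tends_mult; apply tends_affine_inv.
Qed.

Lemma tends_global_ratio_at (j : nat) : In j (others K) ->
  tends (global_ratio_at alpha j) (alpha j / (alpha j + alpha 0%nat)).
Proof.
  intro Hj. pose proof (alpha_others j Hj). pose proof alpha0_pos.
  apply (tends_ext (fun n => alpha j / (alpha j + alpha 0%nat - 1 * / n))).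
  - apply (filter_imp (fun n => 1 <= n /\ 0 < alpha j + alpha 0%nat - 1 * / n)).
    + intros n [Hn Hp]. unfold global_ratio_at.
      replace (alpha j * n + alpha 0%nat * n - 1) with (n * (alpha j + alpha 0%nat - 1 * / n)) by (field; lra).
      assert (0 < n * (alpha j + alpha 0%nat - 1 * / n)) by (apply Rmult_lt_0_compat; lra).
      assert ((alpha j + alpha 0%nat) * n - 1 = n * (alpha j + alpha 0%nat - 1 * / n)) by (field; lra).
      field. split; lra.
    + apply filter_and; [apply eventually_ge|].
      apply (tends_eventually_gt _ (alpha j + alpha 0%nat)); [apply tends_affine_inv|lra].
  - apply tends_div; [apply tends_const|apply tends_affine_inv|lra].
Qed.

Lemma tends_lower_sum_at (b : nat) :
  tends (lower_sum_at K alpha b) (Rprod (map (fun j => sum_upto (pow (alpha j / total_rate K alpha)) b) (others K))).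
Proof.
  apply (tends_Rprod _ (fun j n => sum_upto (pow ((alpha j * n - INR b) / (total_rate K alpha * n))) b)).
  intros j Hj. apply tends_geometric_sum. pose proof total_rate_pos.
  apply (tends_ext (fun n => alpha j / total_rate K alpha - (INR b / total_rate K alpha) * / n)).
  - apply (filter_imp (fun n => 1 <= n)); [|apply eventually_ge]. intros n Hn. field. lra.
  - apply tends_affine_inv.
Qed.

Lemma tends_upper_sum_at (b : nat) (th v : R) :
  tends (upper_sum_at K alpha b th v) (limit_factor + th ^ b * (1 / (1 - v)) ^ (K - 1)).
Proof.
  apply tends_plus; [|apply tends_const].
  apply (tends_Rprod _ (fun j n => 1 / (1 - corner_ratio_at K alpha b j n))).
  intros j Hj. pose proof (share_le_ratio_bound j Hj). pose proof ratio_bound_lt_1.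
  apply tends_div; [apply tends_const|apply tends_minus; [apply tends_const|]|lra].
  apply tends_corner_ratio_at. exact Hj.
Qed.

Lemma tends_approx_factor_at : tends (approx_factor_at K alpha) limit_factor.
Proof.
  pose proof others_rate_pos. pose proof total_rate_pos. pose proof total_rate_eq as HA.
  set (A1 := others_rate K alpha) in *. set (A := total_rate K alpha) in *.
  set (Z := Rprod (map (fun j => A - alpha j) (seq 0 K))).
  assert (HZ : 0 < Z) by (apply Rprod_pos; intros j Hj; apply in_seq in Hj; apply total_minus_alpha_pos; lia).
  set (c := INR (K - 1)).
  (* divide numerator and denominator by n^K *)
  apply (tends_ext (fun n => (A1 - (c - 1) * / n)
                   * Rprod (map (fun i => A - (c - 1 - INR i) * / n) (seq 0 (K - 1))) / Z)).
  - apply (filter_imp (fun n => 1 <= n)); [|apply eventually_ge]. intros n Hn.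
    unfold approx_factor_at. fold A1 A c.
    rewrite (Rprod_ext (fun i => A1 * n - c + alpha 0%nat * n + 1 + INR i)
                       (fun i => n * (A - (c - 1 - INR i) * / n))) by (intros; rewrite HA; field; lra).
    rewrite (Rprod_ext (fun j => A * n - alpha j * n) (fun j => n * (A - alpha j))) by (intros; ring).
    rewrite !Rprod_scal, !length_seq. fold Z.
    replace (n ^ K) with (n * n ^ (K - 1)) by (rewrite tech_pow_Rmult; f_equal; lia).
    replace (A1 * n - c + 1) with (n * (A1 - (c - 1) * / n)) by (field; lra).
    pose proof (pow_lt n (K - 1) ltac:(lra)). field. repeat split; lra.
  - replace limit_factor with (A1 * Rprod (map (fun _ => A) (seq 0 (K - 1))) / Z).
    + apply tends_div; [|apply tends_const|lra]. apply tends_mult; [apply tends_affine_inv|].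
      apply (tends_Rprod _ (fun i n => A - (c - 1 - INR i) * / n) (fun _ => A)).
      intros. apply tends_affine_inv.
    + assert (HZ1 : 0 < Rprod (map (fun j => A - alpha j) (others K))).
      { apply Rprod_pos. intros j Hj. apply total_minus_alpha_pos. pose proof (in_others K j Hj). lia. }
      unfold limit_factor, Z. fold A.
      rewrite Rprod_const, length_seq, seq_0_others by lia. cbn [map].
      change (Rprod ((A - alpha 0%nat) :: map (fun j => A - alpha j) (others K)))
        with ((A - alpha 0%nat) * Rprod (map (fun j => A - alpha j) (others K))).
      rewrite (Rprod_ext (fun j => 1 / (1 - alpha j / A)) (fun j => A * / (A - alpha j))).
      * rewrite Rprod_scal, Rprod_inv, length_others. replace (A - alpha 0%nat) with A1 by lra.
        field. lra.
      * intros j Hj. pose proof (total_minus_alpha_pos j ltac:(pose proof (in_others K j Hj); lia)) as Hj'.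
        fold A in Hj'. field. split; lra.
Qed.

End Limits.

Lemma damping_choice (q : R) : 0 <= q < 1 -> exists th v, 0 <= th < 1 /\ 0 <= v < 1 /\ q < th * v.
Proof.
  intro Hq. set (u := (1 + q) / 2). set (v := (1 + u) / 2).
  assert (0 < u < 1 /\ q < u) by (unfold u; lra).
  assert (0 < v < 1 /\ u < v) by (unfold v; lra).
  exists (u / v), v. repeat split; try lra.
  - apply Rlt_le, Rdiv_lt_0_compat; lra.
  - apply (Rmult_lt_reg_r v); [lra|]. field_simplify; lra.
  - replace (u / v * v) with u by (field; lra). lra.
Qed.

Lemma window_choice (q th c C eps : R) : 0 <= q < 1 -> 0 <= th < 1 -> 0 <= c -> 0 <= C -> 0 < eps ->
  exists b, c * q ^ b < eps /\ th ^ b * C < eps.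
Proof.
  intros Hq Hth Hc HC Heps.
  destruct (pow_lt_1_zero q ltac:(rewrite Rabs_pos_eq; lra) (eps / (c + 1))
              ltac:(apply Rdiv_lt_0_compat; lra)) as [b1 Hb1].
  destruct (pow_lt_1_zero th ltac:(rewrite Rabs_pos_eq; lra) (eps / (C + 1))
              ltac:(apply Rdiv_lt_0_compat; lra)) as [b2 Hb2].
  exists (Nat.max b1 b2).
  specialize (Hb1 (Nat.max b1 b2) ltac:(lia)). specialize (Hb2 (Nat.max b1 b2) ltac:(lia)).
  rewrite Rabs_pos_eq in Hb1, Hb2 by (apply pow_le; lra).
  split.
  - apply Rle_lt_trans with (c * (eps / (c + 1))); [apply Rmult_le_compat_l; lra|].
    apply (Rmult_lt_reg_r (c + 1)); [lra|]. field_simplify; nra.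
  - apply Rle_lt_trans with (eps / (C + 1) * C); [apply Rmult_le_compat_r; lra|].
    apply (Rmult_lt_reg_r (C + 1)); [lra|]. field_simplify; nra.
Qed.

Section Asymptotics.
Variables (K : nat) (alpha : nat -> R).
Hypothesis hK : (2 <= K)%nat.
Hypothesis halpha : forall j, (j < K)%nat -> 0 < alpha j.

Lemma truncated_limit_factor (b : nat) :
  (1 - INR (K - 1) * ratio_bound K alpha ^ b) * limit_factor K alpha <= Rprod (map (fun j => sum_upto (pow (alpha j / total_rate K alpha)) b) (others K)).
Proof.
  rewrite <- length_others. unfold limit_factor.
  rewrite (Rprod_ext (fun j => sum_upto (pow (alpha j / total_rate K alpha)) b)
                     (fun j => (1 - (alpha j / total_rate K alpha) ^ b) * (1 / (1 - alpha j / total_rate K alpha)))).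
  - apply Rprod_union_bound.
    + intros j Hj. pose proof (share_le_ratio_bound K alpha hK halpha j Hj).
      pose proof (ratio_bound_lt_1 K alpha hK halpha).
      split; [split|].
      * apply pow_le; lra.
      * apply pow_incr; lra.
      * apply Rlt_le, Rdiv_lt_0_compat; lra.
    + pose proof (ratio_bound_lt_1 K alpha hK halpha).
      split; [apply pow_le|apply pow_le_one]; lra.
  - intros j Hj. pose proof (share_le_ratio_bound K alpha hK halpha j Hj).
    pose proof (ratio_bound_lt_1 K alpha hK halpha).
    rewrite geometric_sum by lra. unfold Rdiv. ring.
Qed.

Lemma window_hypotheses_eventually (b : nat) (th v : R) : ratio_bound K alpha < th * v ->
  Rbar_locally p_infty (fun n =>
    (forall j, In j (others K) -> INR b <= alpha j * n) /\
    1 <= others_rate K alpha * n - window_shift K b /\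
    (forall j, In j (others K) -> corner_ratio_at K alpha b j n < 1) /\
    (forall j, In j (others K) -> global_ratio_at alpha j n <= th * v)).
Proof.
  intro Hthv. pose proof (ratio_bound_lt_1 K alpha hK halpha).
  repeat apply filter_and.
  - apply eventually_forall_list. intros j Hj.
    apply eventually_linear_ge, (alpha_others K alpha hK halpha j Hj).
  - apply (filter_imp (fun n => 1 + window_shift K b <= others_rate K alpha * n)); [intros; lra|].
    apply eventually_linear_ge, (others_rate_pos K alpha hK halpha).
  - apply eventually_forall_list. intros j Hj. apply (tends_eventually_lt _ (alpha j / total_rate K alpha)).
    + apply tends_corner_ratio_at; auto.
    + pose proof (share_le_ratio_bound K alpha hK halpha j Hj). lra.
  - apply eventually_forall_list. intros j Hj.
    apply (filter_imp (fun n => global_ratio_at alpha j n < th * v)); [intros; lra|].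
    apply (tends_eventually_lt _ (alpha j / (alpha j + alpha 0%nat))).
    + apply (tends_global_ratio_at K); auto.
    + pose proof (pair_share_le_ratio_bound K alpha hK halpha j Hj). lra.
Qed.

Lemma B_ratio_eventually (b : nat) (th v lo hi : R) :
  0 <= th <= 1 -> 0 <= v < 1 -> ratio_bound K alpha < th * v ->
  lo * limit_factor K alpha < Rprod (map (fun j => sum_upto (pow (alpha j / total_rate K alpha)) b) (others K)) ->
  limit_factor K alpha + th ^ b * (1 / (1 - v)) ^ (K - 1) < hi * limit_factor K alpha ->
  Rbar_locally p_infty (fun n => forall m : nat -> nat,
    (forall j, (j < K)%nat -> (0 < m j)%nat /\ INR (m j) = alpha j * n) ->
    lo < B (map m (seq 0 K)) / Bapprox (map m (seq 0 K)) < hi).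
Proof.
  intros Hth Hv Hthv Hlo Hhi.
  pose proof (limit_factor_ge_1 K alpha hK halpha) as HP.
  set (Lb := Rprod (map (fun j => sum_upto (pow (alpha j / total_rate K alpha)) b) (others K))) in *.
  set (Ub := limit_factor K alpha + th ^ b * (1 / (1 - v)) ^ (K - 1)) in *.
  assert (Hlower : Rbar_locally p_infty (fun n => lo < lower_sum_at K alpha b n / approx_factor_at K alpha n)).
  { apply (tends_eventually_gt _ (Lb / limit_factor K alpha)).
    - apply tends_div; [apply tends_lower_sum_at|apply tends_approx_factor_at|lra]; auto.
    - apply (Rmult_lt_reg_r (limit_factor K alpha)); [lra|]. field_simplify; lra. }
  assert (Hupper : Rbar_locally p_infty (fun n => upper_sum_at K alpha b th v n / approx_factor_at K alpha n < hi)).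
  { apply (tends_eventually_lt _ (Ub / limit_factor K alpha)).
    - apply tends_div; [apply tends_upper_sum_at|apply tends_approx_factor_at|lra]; auto.
    - apply (Rmult_lt_reg_r (limit_factor K alpha)); [lra|]. field_simplify; lra. }
  assert (Hfactor : Rbar_locally p_infty (fun n => 0 < approx_factor_at K alpha n)).
  { apply (tends_eventually_gt _ (limit_factor K alpha)); [apply tends_approx_factor_at; auto|lra]. }
  pose proof (filter_and _ _ Hlower (filter_and _ _ Hupper (filter_and _ _ Hfactor
    (window_hypotheses_eventually b th v Hthv)))) as Hall.
  revert Hall. apply filter_imp. intros n (Hlo_n & Hhi_n & HQ & Hbn & Hlow & Hcr & Hglob) m Hm.
  pose proof (B_ratio_bounds K alpha n m hK Hm b th v Hbn Hlow Hcr Hglob Hth Hv HQ). lra.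
Qed.

Theorem B_equiv_Bapprox (eps : R) : 0 < eps ->
  Rbar_locally p_infty (fun n => forall m : nat -> nat,
    (forall j, (j < K)%nat -> (0 < m j)%nat /\ INR (m j) = alpha j * n) ->
    Rabs (B (map m (seq 0 K)) / Bapprox (map m (seq 0 K)) - 1) < eps).
Proof.
  intro Heps.
  pose proof (ratio_bound_lt_1 K alpha hK halpha) as Hq.
  pose proof (limit_factor_ge_1 K alpha hK halpha) as HP.
  (* damping outside the window, then a window width making both error terms < eps *)
  destruct (damping_choice _ Hq) as (th & v & Hth & Hv & Hthv).
  assert (HC : 0 <= (1 / (1 - v)) ^ (K - 1)) by (apply pow_le, Rlt_le, Rdiv_lt_0_compat; lra).
  destruct (window_choice (ratio_bound K alpha) th (INR (K - 1)) ((1 / (1 - v)) ^ (K - 1)) eps)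
    as (b & Hsmall_q & Hsmall_th); try apply pos_INR; auto.
  apply (filter_imp (fun n => forall m : nat -> nat,
    (forall j, (j < K)%nat -> (0 < m j)%nat /\ INR (m j) = alpha j * n) ->
    1 - eps < B (map m (seq 0 K)) / Bapprox (map m (seq 0 K)) < 1 + eps)).
  { intros n H m Hm. specialize (H m Hm). apply Rabs_def1; lra. }
  apply (B_ratio_eventually b th v); auto; try lra.
  - (* lower limit: (1 - eps) P < (1 - (K - 1) q^b) P <= truncated product *)
    pose proof (truncated_limit_factor b). nra.
  - (* upper limit: P + th^b C < P + eps <= (1 + eps) P *)
    nra.
Qed.
End Asymptotics.

Theorem mainTheorem16 (S : nat) (alpha : nat -> R)
  (hS : (2 <= S)%nat) (halpha : forall j, (j < S)%nat -> 0 < alpha j) :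
  forall eps : R, 0 < eps ->
  exists N : R, forall (n : R) (m : nat -> nat),
    N <= n ->
    (forall j, (j < S)%nat -> (0 < m j)%nat /\ INR (m j) = alpha j * n) ->
    Rabs (B (map m (seq 0 S)) / Bapprox (map m (seq 0 S)) - 1) < eps.
Proof.
  intros eps Heps.
  destruct (B_equiv_Bapprox S alpha hS halpha eps Heps) as [M HM].
  exists (M + 1). intros n m Hn. apply HM. lra.
Qed.
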